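(* Let $G$ be a finite graph with $n$ vertices given together with an RDV representation (rooted host tree $T$). Let $v_1,\dots,v_n$ be any bottom-up enumeration of the vertices of $G$ with respect to this representation. Then the greedy matching algorithm, run on $G$ with vertex order $v_1,\dots,v_n$, returns a maximum matching of $G$, i.e., a matching of largest possible cardinality.
   Context: An RDV representation of a graph $G$ consists of a rooted tree $T$ (the host tree; its vertices are called nodes) and, for every vertex $v$ of $G$, a downward path $P(v)$ in $T$ (a path that starts at some node and then always proceeds from a node to one of its children), such that for distinct vertices $v,w$, $vw$ is an edge of $G$ if and only if $P(v)$ and $P(w)$ share at least one node. For a vertex $v$, $t(v)$ denotes the node of $P(v)$ closest to the root, and $b(v)$ the node of $P(v)$ farthest from the root. A bottom-up enumeration is an ordering of the vertices of $G$ by non-increasing distance of $t(v)$ from the root of $T$ (ties broken arbitrarily). The greedy matching algorithm with vertex order $v_1,\dots,v_n$: start with $M=\emptyset$; for $i=1,\dots,n$, if $v_i$ is not yet matched (not an endpoint of an edge of $M$) and has at least one unmatched neighbour, then among its unmatched neighbours choose the one $v_j$ with smallest index $j$ and add the edge $v_iv_j$ to $M$; finally return $M$. *)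

From HB Require Import structures.
From mathcomp Require Import all_boot.
Set Implicit Arguments. Unset Strict Implicit. Unset Printing Implicit Defensive.

Definition rooted_tree (N : finType) (root : N) (parent : N -> N) : Prop :=
  parent root = root /\ forall x : N, exists k, iter k parent x = root.

(* [ancestor parent a x]: a lies on the path from x to the root (reflexive). *)
Definition ancestor (N : finType) (parent : N -> N) (a x : N) : bool :=
  [exists k : 'I_#|N|.+1, iter k parent x == a].

Definition depth (N : finType) (parent : N -> N) (x : N) : nat :=
  #|[set a | ancestor parent a x]|.-1.

Definition on_dpath (N : finType) (parent : N -> N) (t b x : N) : bool :=
  ancestor parent t x && ancestor parent x b.

(* RDV representation of the graph (V, e): vertex v gets downward path P(v)
   from t v down to b v. *)
Definition rdv_rep (V N : finType) (e : rel V) (root : N) (parent : N -> N)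
    (t b : V -> N) : Prop :=
  rooted_tree root parent /\
  (forall v, ancestor parent (t v) (b v)) /\
  (forall v w, v != w ->
     e v w = [exists x, on_dpath parent (t v) (b v) x && on_dpath parent (t w) (b w) x]).

Definition bottom_up (V N : finType) (parent : N -> N) (t : V -> N) (s : seq V) : Prop :=
  perm_eq s (enum V) /\
  sorted (fun x y => depth parent (t y) <= depth parent (t x)) s.

Definition matched_vertices (V : finType) (M : seq (V * V)) : seq V :=
  flatten [seq [:: p.1; p.2] | p <- M].

Definition is_matching (V : finType) (e : rel V) (M : seq (V * V)) : Prop :=
  all (fun p => e p.1 p.2) M /\ uniq (matched_vertices M).

Definition maximum_matching (V : finType) (e : rel V) (M : seq (V * V)) : Prop :=
  is_matching e M /\ forall M', is_matching e M' -> size M' <= size M.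

Definition greedy_step (V : finType) (e : rel V) (s : seq V)
    (M : seq (V * V)) (v : V) : seq (V * V) :=
  if v \in matched_vertices M then M else
  match [seq w <- s | e v w & w \notin matched_vertices M] with
  | w :: _ => rcons M (v, w)
  | [::] => M
  end.

Definition greedy_matching (V : finType) (e : rel V) (s : seq V) : seq (V * V) :=
  foldl (greedy_step e s) [::] s.

From mathcomp Require Import all_boot.
From mathcomp Require Import zify.
Set Implicit Arguments. Unset Strict Implicit. Unset Printing Implicit Defensive.

(* Along the bottom-up order the greedy algorithm keeps an invariant: every processed
   vertex is matched or has only matched neighbours, and the current matching M extends
   to a matching M ++ R at least as large as any matching.  When v is matched to its
   first unmatched neighbour w, an R containing edges vu and wz is repaired by trading
   them for uz.  That edge exists because t w is at least as deep as t u (w precedes u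
   in the order) while t w and t z are at least as high as t v (w and z are not yet
   processed): P(u) then contains t v and t w, and P(z) meets it at t w or at t z.
   Once every vertex is processed, no edge of R can have both ends unmatched, so R is
   empty and M itself is maximum. *)

Section RootedTree.

Variables (N : finType) (root : N) (parent : N -> N).
Hypothesis tree : rooted_tree root parent.

Lemma periodic_root c d : iter d parent c = c -> 0 < d -> c = root.
Proof.
case: tree => parent_root reach cycle d_gt0; have [n reach_n] := reach c.
have iter_nd : iter (n * d) parent c = c.
  by elim: n {reach_n} => //= n IHn; rewrite mulSn iterD IHn cycle.
have le_n_nd : n <= n * d by rewrite leq_pmulr.
by rewrite -iter_nd -(subnK le_n_nd) iterD reach_n iter_fix.
Qed.

(* Pigeonhole on the first #|N|.+1 iterates yields a cycle, which can only sit at the root. *)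
Lemma iter_card_root x : iter #|N| parent x = root.
Proof.
pose f (i : 'I_#|N|.+1) := iter i parent x.
have /injectivePn [i [j neq_ij eq_fij]] : ~~ injectiveb f.
  by apply/injectiveP => /leq_card; rewrite card_ord ltnn.
have [i0 [j0 [lt_ij le_j cycle]]] : exists i0 j0,
    [/\ i0 < j0, j0 <= #|N| & iter i0 parent x = iter j0 parent x].
  case: (ltngtP i j) => [lt_ij | lt_ji | /val_inj eq_ij].
  - by exists i, j; split; rewrite // -ltnS.
  - by exists j, i; split; rewrite // -ltnS.
  - by rewrite eq_ij eqxx in neq_ij.
have root_i : iter i0 parent x = root.
  apply: (periodic_root (d := j0 - i0)); last by rewrite subn_gt0.
  by rewrite -iterD subnK 1?ltnW.
have le_i : i0 <= #|N| by rewrite ltnW // (leq_trans lt_ij).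
by rewrite -(subnK le_i) iterD root_i iter_fix //; case: tree.
Qed.

Lemma ancestorP a x : reflect (exists k, iter k parent x = a) (ancestor parent a x).
Proof.
apply: (iffP existsP) => [[k /eqP <-]|[k <-]]; first by exists k.
have [le_k | lt_k] := leqP k #|N|; first by exists (Ordinal (le_k : k < #|N|.+1)).
exists ord_max => /=; apply/eqP.
by rewrite iter_card_root -(subnK (ltnW lt_k)) iterD iter_card_root iter_fix //; case: tree.
Qed.

Lemma ancestor_refl a : ancestor parent a a.
Proof. by apply/existsP; exists ord0. Qed.

Lemma ancestor_trans a c x :
  ancestor parent a c -> ancestor parent c x -> ancestor parent a x.
Proof.
move=> /ancestorP [k <-] /ancestorP [m <-].
by apply/ancestorP; exists (k + m); rewrite iterD.
Qed.

Lemma ancestor_antisym a c : ancestor parent a c -> ancestor parent c a -> a = c.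
Proof.
move=> /ancestorP [k iter_k] /ancestorP [m iter_m].
have [km0 | km_gt0] := posnP (k + m).
  by move: iter_k; have -> : k = 0 by lia.
have a_root : a = root by apply: (periodic_root (d := k + m)); rewrite // iterD iter_m.
by rewrite -iter_m a_root iter_fix //; case: tree.
Qed.

Lemma ancestor_total a c x : ancestor parent a x -> ancestor parent c x ->
  ancestor parent a c || ancestor parent c a.
Proof.
move=> /ancestorP [i <-] /ancestorP [j <-].
have [le_ij | /ltnW le_ji] := leqP i j; apply/orP; [right | left]; apply/ancestorP.
  by exists (j - i); rewrite -iterD subnK.
by exists (i - j); rewrite -iterD subnK.
Qed.

Lemma ancestor_depth_ltn a c :
  ancestor parent a c -> a != c -> depth parent a < depth parent c.
Proof.
move=> anc_ac neq_ac; rewrite /depth.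
have sub : [set y | ancestor parent y a] \proper [set y | ancestor parent y c].
  apply/properP; split.
    by apply/subsetP => y; rewrite !inE => /ancestor_trans; apply.
  exists c; rewrite !inE ?ancestor_refl //; apply: contra neq_ac => anc_ca.
  by rewrite (ancestor_antisym anc_ac anc_ca).
have : 0 < #|[set y | ancestor parent y a]| by apply/card_gt0P; exists a; rewrite inE ancestor_refl.
by have := proper_card sub; lia.
Qed.

(* Two ancestors of a common node are comparable, so depth decides which one is higher. *)
Lemma ancestor_of_depth a c x : ancestor parent a x -> ancestor parent c x ->
  depth parent a <= depth parent c -> ancestor parent a c.
Proof.
move=> anc_ax anc_cx le_ac; case/orP: (ancestor_total anc_ax anc_cx) => // anc_ca.
have [-> // | neq_ca] := eqVneq c a; first exact: ancestor_refl.
by move: le_ac; rewrite leqNgt ancestor_depth_ltn.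
Qed.

End RootedTree.

Lemma perm_catCA_eq (T : eqType) (s1 s2 s3 : seq T) :
  perm_eq (s1 ++ s2 ++ s3) (s2 ++ s1 ++ s3).
Proof. by apply/permPl; exact: perm_catCA. Qed.

Lemma irreflexive_neq (T : eqType) (r : rel T) x y : irreflexive r -> r x y -> x != y.
Proof. by move=> r_irr; apply: contraTneq => ->; rewrite r_irr. Qed.

Section RDV.

Variables (V N : finType) (e : rel V) (root : N) (parent : N -> N) (t b : V -> N).
Hypotheses (rdv : rdv_rep e root parent t b) (e_irr : irreflexive e).

Let tree : rooted_tree root parent := rdv.1.

Local Notation P v := (on_dpath parent (t v) (b v)).
Local Notation dt v := (depth parent (t v)).

Lemma rdv_edgeP v u : v != u -> reflect (exists x, P v x && P u x) (e v u).
Proof. by move=> neq_vu; rewrite rdv.2.2 //; apply: existsP. Qed.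

Lemma rdv_edge_common v u : e v u -> exists x, P v x && P u x.
Proof. by move=> e_vu; apply/(rdv_edgeP (irreflexive_neq e_irr e_vu)). Qed.

Lemma rdv_top_on_path v : P v (t v).
Proof. by rewrite /on_dpath ancestor_refl rdv.2.1. Qed.

Lemma rdv_edge_top v u : e v u -> dt u <= dt v -> P u (t v).
Proof.
move=> e_vu le_uv.
have [x /andP [/andP [anc_v_x anc_x_bv] /andP [anc_u_x anc_x_bu]]] := rdv_edge_common e_vu.
rewrite /on_dpath (ancestor_of_depth tree anc_u_x anc_v_x le_uv) /=.
exact (ancestor_trans tree anc_v_x anc_x_bu).
Qed.

(* P(u) and P(z) meet at t w when t z is above t w, and at t z otherwise. *)
Lemma rdv_edge_swap v u w z :
  e v u -> e v w -> e w z -> u != z ->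
  dt u <= dt w -> dt w <= dt v -> dt z <= dt v -> e u z.
Proof.
move=> e_vu e_vw e_wz neq_uz le_uw le_wv le_zv.
have /andP [anc_u_v anc_v_bu] := rdv_edge_top e_vu (leq_trans le_uw le_wv).
have /andP [anc_w_v anc_v_bw] := rdv_edge_top e_vw le_wv.
have anc_u_w := ancestor_of_depth tree anc_u_v anc_w_v le_uw.
apply/(rdv_edgeP neq_uz).
have [x /andP [/andP [anc_w_x anc_x_bw] /andP [anc_z_x anc_x_bz]]] := rdv_edge_common e_wz.
case/orP: (ancestor_total tree anc_z_x anc_w_x) => [anc_z_w | anc_w_z].
  exists (t w); rewrite /on_dpath anc_u_w (ancestor_trans tree anc_w_v anc_v_bu).
  by rewrite anc_z_w (ancestor_trans tree anc_w_x anc_x_bz).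
have anc_z_bw := ancestor_trans tree anc_z_x anc_x_bw.
have anc_z_v := ancestor_of_depth tree anc_z_bw anc_v_bw le_zv.
exists (t z); rewrite rdv_top_on_path andbT /on_dpath.
by rewrite (ancestor_trans tree anc_u_w anc_w_z) (ancestor_trans tree anc_z_v anc_v_bu).
Qed.

End RDV.

Section Matchings.

Variables (V : finType) (e : rel V).
Hypothesis e_sym : symmetric e.

Local Notation cov := matched_vertices.
Local Notation edges M := (all (fun p : V * V => e p.1 p.2) M).

Lemma matched_vertices_cons (M : seq (V * V)) p : cov (p :: M) = p.1 :: p.2 :: cov M.
Proof. by []. Qed.

Lemma matched_vertices_cat (M R : seq (V * V)) : cov (M ++ R) = cov M ++ cov R.
Proof. by rewrite /matched_vertices map_cat flatten_cat. Qed.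

Lemma matched_vertices_rcons (M : seq (V * V)) p : cov (rcons M p) = cov M ++ [:: p.1; p.2].
Proof. by rewrite -cats1 matched_vertices_cat. Qed.

Lemma matched_partner (R : seq (V * V)) x : x \in cov R -> edges R ->
  exists y R0, [/\ e x y, edges R0,
    perm_eq (cov R) (x :: y :: cov R0) & size R = (size R0).+1].
Proof.
elim: R => [|p R IHR] //=; rewrite !matched_vertices_cons !inE => x_in /andP [e_p edges_R].
have [-> | neq_x1] := eqVneq x p.1; first by exists p.2, R.
have [-> | neq_x2] := eqVneq x p.2.
  by exists p.1, R; split; rewrite 1?e_sym //; exact: (perm_catCA_eq [:: p.1] [:: p.2]).
move: x_in; rewrite (negPf neq_x1) (negPf neq_x2) /= => /IHR /(_ edges_R).
case=> y [R0 [e_xy edges_R0 perm_R size_R]].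
exists y, (p :: R0); split; rewrite /= ?e_p ?size_R //.
rewrite !matched_vertices_cons.
by apply: perm_trans (perm_catCA_eq [:: p.1; p.2] [:: x; y] _); rewrite /= !perm_cons.
Qed.

Lemma uniq_matched_perm (X : seq V) (R : seq (V * V)) x y s :
  perm_eq (cov R) (x :: y :: s) -> uniq (X ++ cov R) -> uniq (x :: y :: X ++ s).
Proof.
move=> perm_R; rewrite (perm_uniq (_ : perm_eq _ (X ++ x :: y :: s))) ?perm_cat2l //.
by rewrite (perm_uniq (perm_catCA_eq X [:: x; y] s)).
Qed.

Lemma matching_rcons_cat (M R R' : seq (V * V)) v w :
  edges M -> e v w -> edges R' -> uniq (v :: w :: cov M ++ cov R') ->
  size R <= (size R').+1 ->
  is_matching e (rcons M (v, w) ++ R') /\ size (M ++ R) <= size (rcons M (v, w) ++ R').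
Proof.
move=> edges_M e_vw edges_R' uniq_R' size_R'; split; last first.
  by rewrite !size_cat size_rcons addSn -addnS leq_add2l.
split; first by rewrite all_cat all_rcons e_vw edges_M edges_R'.
rewrite matched_vertices_cat matched_vertices_rcons -catA.
by rewrite (perm_uniq (perm_catCA_eq (cov M) [:: v; w] (cov R'))).
Qed.

(* R' is R minus its edges at v and w, plus (u, z) when R matches v to u and w to z. *)
Lemma matching_exchange (M R : seq (V * V)) v w :
  is_matching e (M ++ R) -> v \notin cov M -> w \notin cov M -> e v w -> v != w ->
  (forall u z, e v u -> u \notin cov M -> u != w -> e w z ->
     z \notin cov M -> z != v -> u != z -> e u z) ->
  exists R', is_matching e (rcons M (v, w) ++ R') /\
             size (M ++ R) <= size (rcons M (v, w) ++ R').
Proof.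
move=> [edges_MR uniq_MR] vM wM e_vw neq_vw swap.
move: edges_MR uniq_MR; rewrite all_cat matched_vertices_cat => /andP [edges_M edges_R] uniq_MR.
have [vR | vR] := boolP (v \in cov R).
  have [u [R1 [e_vu edges_R1 perm_R size_R]]] := matched_partner vR edges_R.
  have uniq_vu := uniq_matched_perm perm_R uniq_MR.
  have [eq_uw | neq_uw] := eqVneq u w.
    by exists R1; apply: matching_rcons_cat; rewrite -?eq_uw ?size_R.
  have [wR1 | wR1] := boolP (w \in cov R1).
    have [z [R0 [e_wz edges_R0 perm_R1 size_R1]]] := matched_partner wR1 edges_R1.
    have uniq_wzvu := uniq_matched_perm (X := [:: v, u & cov M]) perm_R1 uniq_vu.
    have uniq_vwuz : uniq (v :: w :: u :: z :: cov M ++ cov R0).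
      rewrite (perm_uniq (_ : perm_eq _ (w :: z :: v :: u :: cov M ++ cov R0))) //.
      by rewrite (perm_catCA [:: v] [:: w]) /= perm_cons (perm_catCA [:: v; u] [:: z]).
    have [neq_uz uM zM neq_zv] : [/\ u != z, u \notin cov M, z \notin cov M & z != v].
      move: uniq_vwuz; rewrite /= !inE !mem_cat !negb_or.
      case/and5P => /and5P [_ _ neq_vz _ _] _ /and3P [-> -> _] /andP [-> _] _.
      by rewrite eq_sym.
    exists ((u, z) :: R0); apply: matching_rcons_cat; rewrite ?size_R ?size_R1 //.
      by rewrite /= edges_R0 andbT (swap u z) // eq_sym.
    rewrite matched_vertices_cons.
    rewrite (perm_uniq (_ : perm_eq _ (v :: w :: u :: z :: cov M ++ cov R0))) //.
    by rewrite !perm_cons; exact: (perm_catCA_eq (cov M) [:: u; z]).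
  exists R1; apply: matching_rcons_cat; rewrite ?size_R //.
  move: uniq_vu; rewrite /= !inE !mem_cat !negb_or => /and3P [/and3P [_ _ vR1] _ ->].
  by rewrite neq_vw vM vR1 wM wR1.
have [wR | wR] := boolP (w \in cov R).
  have [z [R0 [e_wz edges_R0 perm_R size_R]]] := matched_partner wR edges_R.
  have uniq_wz := uniq_matched_perm perm_R uniq_MR.
  exists R0; apply: matching_rcons_cat; rewrite ?size_R //.
  have := vR; rewrite (perm_mem perm_R) !inE !negb_or => /and3P [_ _ vR0].
  move: uniq_wz; rewrite /= !inE !mem_cat !negb_or => /and3P [/and3P [_ _ wR0] _ ->].
  by rewrite neq_vw vM vR0 wM wR0.
exists R; apply: matching_rcons_cat; rewrite // ?leqnSn //=.
by rewrite inE !mem_cat !negb_or neq_vw vM vR wM wR uniq_MR.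
Qed.

End Matchings.

Definition settled (V : finType) (e : rel V) (M : seq (V * V)) (x : V) : Prop :=
  x \in matched_vertices M \/ forall y, e x y -> y \in matched_vertices M.

Definition optimal_prefix (V : finType) (e : rel V) (M : seq (V * V)) : Prop :=
  forall M', is_matching e M' ->
    exists R, is_matching e (M ++ R) /\ size M' <= size (M ++ R).

Lemma settled_rcons (V : finType) (e : rel V) M p x :
  settled e M x -> settled e (rcons M p) x.
Proof.
have sub y : y \in matched_vertices M -> y \in matched_vertices (rcons M p).
  by rewrite matched_vertices_rcons mem_cat => ->.
by case=> [/sub | nbhd]; [left | right => y /nbhd /sub].
Qed.

Lemma optimal_prefix_nil (V : finType) (e : rel V) : optimal_prefix e [::].
Proof. by move=> M' M'_matching; exists M'. Qed.

Lemma settled_optimal_maximum (V : finType) (e : rel V) M :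
  (forall x, settled e M x) -> optimal_prefix e M -> maximum_matching e M.
Proof.
move=> settled_M opt_M.
have no_ext R : is_matching e (M ++ R) -> R = [::].
  case: R => [|p R] // [edges_MR uniq_MR]; exfalso.
  move: edges_MR uniq_MR; rewrite all_cat matched_vertices_cat matched_vertices_cons.
  case/andP=> _ /andP [e_p _]; rewrite cat_uniq => /and3P [_ /hasPn fresh _].
  have p1M : p.1 \notin matched_vertices M by apply: fresh; rewrite inE eqxx.
  have p2M : p.2 \notin matched_vertices M by apply: fresh; rewrite !inE eqxx orbT.
  by case: (settled_M p.1) => [| /(_ _ e_p)]; apply/negP.
have [R [MR_matching _]] := opt_M [::] (conj isT isT).
move: (MR_matching); rewrite (no_ext R MR_matching) cats0 => M_matching.
by split=> // M' /opt_M [R' [/no_ext -> ]]; rewrite cats0.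
Qed.

Section Greedy.

Variables (V N : finType) (e : rel V) (root : N) (parent : N -> N) (t b : V -> N).
Variable s : seq V.
Hypotheses (e_sym : symmetric e) (e_irr : irreflexive e).
Hypotheses (rdv : rdv_rep e root parent t b) (s_bottom_up : bottom_up parent t s).

Local Notation cov := matched_vertices.
Local Notation dt v := (depth parent (t v)).
Local Notation deeper_first := (fun x y => dt y <= dt x).

Lemma deeper_first_trans : transitive deeper_first.
Proof. by move=> ? ? ? /[swap]; apply: leq_trans. Qed.

Definition greedy_invariant (M : seq (V * V)) (p : seq V) : Prop :=
  {in p, forall x, settled e M x} /\ optimal_prefix e M.

Lemma mem_bottom_up x : x \in s.
Proof. by rewrite (perm_mem s_bottom_up.1) mem_enum. Qed.

Section Step.

Variables (p q : seq V) (v : V) (M : seq (V * V)).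
Hypothesis s_split : s = p ++ v :: q.
Hypothesis p_settled : {in p, forall x, settled e M x}.

Lemma depth_suffix x : x \in q -> dt x <= dt v.
Proof.
move=> x_q; move: s_bottom_up.2; rewrite s_split sorted_cat_cons => /andP [_].
by rewrite (path_sortedE deeper_first_trans) => /andP [/allP /(_ x x_q)].
Qed.

Lemma unmatched_edge_suffix x y :
  x \notin cov M -> y \notin cov M -> e x y -> x != v -> x \in q.
Proof.
move=> xM yM e_xy neq_xv; have := mem_bottom_up x.
rewrite s_split mem_cat inE (negPf neq_xv) /= orbC; case: (boolP (x \in q)) => //= _ x_p.
by case: (p_settled x_p) => [| /(_ y e_xy)]; rewrite ?(negPf xM) ?(negPf yM).
Qed.

Lemma greedy_choice_swap w l :
  v \notin cov M -> [seq y <- s | e v y & y \notin cov M] = w :: l ->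
  forall u z, e v u -> u \notin cov M -> u != w -> e w z ->
    z \notin cov M -> z != v -> u != z -> e u z.
Proof.
move=> vM F_def u z e_vu uM neq_uw e_wz zM neq_zv neq_uz.
have : w \in [seq y <- s | e v y & y \notin cov M] by rewrite F_def inE eqxx.
rewrite mem_filter => /andP [/andP [e_vw wM] _].
have w_q : w \in q.
  by apply: (unmatched_edge_suffix wM vM); rewrite 1?e_sym // eq_sym (irreflexive_neq e_irr).
apply: (rdv_edge_swap rdv e_irr e_vu e_vw e_wz neq_uz); last 2 first.
- exact: depth_suffix w_q.
- by apply/depth_suffix/(unmatched_edge_suffix zM wM); rewrite 1?e_sym.
have : u \in w :: l by rewrite -F_def mem_filter e_vu uM mem_bottom_up.
rewrite inE (negPf neq_uw) /= => u_l.
have : sorted deeper_first (w :: l).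
  by rewrite -F_def (sorted_filter deeper_first_trans) ?s_bottom_up.2.
by rewrite /= (path_sortedE deeper_first_trans) => /andP [/allP /(_ u u_l)].
Qed.

Lemma greedy_step_invariant :
  optimal_prefix e M -> greedy_invariant (greedy_step e s M v) (rcons p v).
Proof.
move=> opt_M; rewrite /greedy_step.
have settled_rcons_p M' : (forall x, settled e M x -> settled e M' x) -> settled e M' v ->
    {in rcons p v, forall x, settled e M' x}.
  by move=> mono settled_v x; rewrite mem_rcons inE => /predU1P [-> | /p_settled /mono].
have [vM | vM] := boolP (v \in cov M); first by split=> //; apply: settled_rcons_p; [|left].
case F_def: [seq y <- s | e v y & y \notin cov M] => [|w l].
  split=> //; apply: settled_rcons_p => //; right => y e_vy; apply: contraT => yM.
  have : y \in [seq y <- s | e v y & y \notin cov M].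
    by rewrite mem_filter e_vy yM mem_bottom_up.
  by rewrite F_def.
have : w \in [seq y <- s | e v y & y \notin cov M] by rewrite F_def inE eqxx.
rewrite mem_filter => /andP [/andP [e_vw wM] _].
split.
  apply: settled_rcons_p => [x | ]; first exact: settled_rcons.
  by left; rewrite matched_vertices_rcons mem_cat !inE eqxx orbT.
move=> M' /opt_M [R [MR_matching size_M']].
have [R' [matching' size_R']] := matching_exchange e_sym MR_matching vM wM e_vw
  (irreflexive_neq e_irr e_vw) (greedy_choice_swap vM F_def).
by exists R'; split; last exact: leq_trans size_R'.
Qed.

End Step.

Lemma greedy_fold_invariant q p M : s = p ++ q -> greedy_invariant M p ->
  greedy_invariant (foldl (greedy_step e s) M q) s.
Proof.
elim: q p M => [|v q IHq] p M s_split [p_settled opt_M] /=; first by rewrite s_split cats0.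
apply: (IHq (rcons p v)); first by rewrite cat_rcons.
exact: (greedy_step_invariant s_split p_settled opt_M).
Qed.

End Greedy.

Theorem theorem1 (V N : finType) (e : rel V) (root : N) (parent : N -> N)
    (t b : V -> N) (s : seq V) :
  symmetric e -> irreflexive e ->
  rdv_rep e root parent t b ->
  bottom_up parent t s ->
  maximum_matching e (greedy_matching e s).
Proof.
move=> e_sym e_irr rdv s_bottom_up.
have inv_nil : greedy_invariant e [::] [::] by split=> //; exact: optimal_prefix_nil.
have [s_settled opt] :=
  greedy_fold_invariant e_sym e_irr rdv s_bottom_up (p := [::]) (erefl s) inv_nil.
apply: settled_optimal_maximum opt => x; apply: s_settled.
exact: mem_bottom_up s_bottom_up x.
Qed.
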